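(* Consider a run of the algorithm CTG (defined in the context) in which the event $\mathcal{E}_2$ (defined in the context) holds. Then for every call CS$(w,\epsilon,\delta,S,s)$ made during the run and every $t\le N_2$ such that $C_t\le\phi(S,s)$, where $\phi(S,s)=\frac{\epsilon+|w-\Delta f(S,s)|}{2}$, the call terminates after at most $t$ samples.
   Context: Let $U$ be a finite ground set with $|U|=n$, and let $f:2^U\to\mathbb{R}_{\geq 0}$ be monotone and submodular. For $X\subseteq U$, $u\in U$, write $\Delta f(X,u)=f(X\cup\{u\})-f(X)$. Let $\kappa$ be a positive integer. There is no value oracle for $f$; instead, for any $X\subseteq U$, $u\in U$, one can draw independent samples from a distribution $\mathcal{D}(X,u)$ with $\mathbb{E}[\mathcal{D}(X,u)]=\Delta f(X,u)$ and all samples lying in $[0,R]$; all samples drawn are independent. Logarithms are natural; $h(\alpha)=\log(\kappa/\alpha)/\alpha$. For a call of CS on $(S,u)$, regard its samples as initial terms of an infinite i.i.d. sequence from $\mathcal{D}(S,u)$ and let $\widehat{\Delta f_t}(S,u)$ be the average of the first $t$ terms. Procedure CS$(w,\epsilon,\delta,S,u)$: let $N_2=R^2\log(6nh(\alpha)/\delta)/(2\epsilon^2)$. For $t=1,2,\dots,N_2$: draw the $t$-th sample, update $\widehat{\Delta f_t}(S,u)$, set $C_t=R\sqrt{\log(12nh(\alpha)t^2/\delta)/(2t)}$; if $\widehat{\Delta f_t}(S,u)-C_t\ge w-\epsilon$ return true; else if $\widehat{\Delta f_t}(S,u)+C_t\le w+\epsilon$ return false. If the loop completes, return true iff $\widehat{\Delta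 f_{N_2}}(S,u)\ge w$. Algorithm CTG$(\epsilon,\delta,\alpha)$ with $\epsilon,\delta,\alpha\in(0,1)$: let $N_1=R^2\log(6n/\delta)/(2\epsilon^2)$. For each $s\in U$ let $\hat f(s)$ be the mean of $N_1$ samples from $\mathcal{D}(\emptyset,s)$, and let $d=\max_{s\in U}\hat f(s)$. Set $w\gets d$, $S\gets\emptyset$. While $w>\alpha d/\kappa$: for each $u\in U$ in turn, if $|S|<\kappa$, call CS$(w,\epsilon,\delta,S,u)$ and if it returns true set $S\gets S\cup\{u\}$; after the pass set $w\gets w(1-\alpha)$. Return $S$. Event $\mathcal{E}_2$: for every call of CS on a pair $(S,u)$ and every $t\in\mathbb{N}_+$, $|\widehat{\Delta f_t}(S,u)-\Delta f(S,u)|\le C_t$. *)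

From mathcomp Require Import all_boot all_order all_algebra.
From mathcomp Require Import reals exp.
Set Implicit Arguments. Unset Strict Implicit. Unset Printing Implicit Defensive.
Import Order.TTheory GRing.Theory Num.Theory.
Local Open Scope ring_scope.

Section CTG.
Variables (R : realType) (U : finType).

Definition set_monotone (f : {set U} -> R) :=
  forall A B : {set U}, A \subset B -> f A <= f B.

Definition Delta (f : {set U} -> R) (X : {set U}) (u : U) : R :=
  f (u |: X) - f X.

Definition submodular (f : {set U} -> R) :=
  forall (A B : {set U}) (u : U), A \subset B -> u \notin B ->
    Delta f B u <= Delta f A u.

(* average of the first t terms of a sample sequence X (X 0 is the 1st sample) *)
Definition avg (X : nat -> R) (t : nat) : R :=
  (\sum_(0 <= k < t) X k) / t%:R.

Variables (kappa : nat) (Rb eps delta alpha : R).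

Definition nU : R := #|U|%:R.
Definition h : R := ln (kappa%:R / alpha) / alpha.

Definition N1 : R := Rb ^+ 2 * ln (6 * nU / delta) / (2 * eps ^+ 2).
Definition N2 : R := Rb ^+ 2 * ln (6 * nU * h / delta) / (2 * eps ^+ 2).

Definition Ct (t : nat) : R :=
  Rb * Num.sqrt (ln (12 * nU * h * (t%:R) ^+ 2 / delta) / (2 * t%:R)).

Definition phi (f : {set U} -> R) (w : R) (S : {set U}) (s : U) : R :=
  (eps + `|w - Delta f S s|) / 2.

(* The loop of CS(w,eps,delta,S,u) on the sample sequence X.
   Returns (answer, number of samples drawn).  The loop runs over the
   integers t = 1, 2, ..., with t <= N2, i.e. up to truncn N2. *)
Fixpoint cs_loop (w : R) (X : nat -> R) (fuel t : nat) : bool * nat :=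
  match fuel with
  | 0%N => (w <= avg X t.-1, t.-1)
  | fuel'.+1 =>
      if w - eps <= avg X t - Ct t then (true, t)
      else if avg X t + Ct t <= w + eps then (false, t)
      else cs_loop w X fuel' t.+1
  end.

Definition CS (w : R) (X : nat -> R) : bool * nat :=
  cs_loop w X (Num.truncn N2) 1.

Definition CS_result w X := (CS w X).1.
Definition CS_samples w X := (CS w X).2.

(* ----- the run of CTG -----
   smp0 s k : k-th sample of D(emptyset, s) used for \hat f(s);
   smp i u k : k-th sample of the CS call on element u in pass i
               (each call gets its own infinite sample sequence). *)
Variables (f : {set U} -> R) (smp0 : U -> nat -> R) (smp : nat -> U -> nat -> R).

Definition fhat (s : U) : R := avg (smp0 s) (Num.truncn N1).
Definition dmax : R := \big[Num.max/0]_(s : U) fhat s.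

Definition wpass (i : nat) : R := dmax * (1 - alpha) ^+ i.

(* pass i runs iff the while-test succeeded at the start of passes 0..i *)
Definition pass_runs (i : nat) : Prop :=
  forall j, (j <= i)%N -> alpha * dmax / kappa%:R < wpass j.

Definition pass_step (i : nat) (S : {set U}) (u : U) : {set U} :=
  if (#|S| < kappa)%N then
    (if CS_result (wpass i) (smp i u) then u |: S else S)
  else S.

Fixpoint S_start (i : nat) : {set U} :=
  match i with
  | 0%N => set0
  | i'.+1 => foldl (pass_step i') (S_start i') (enum U)
  end.

(* S at the moment element u is processed in pass i *)
Definition S_before (i : nat) (u : U) : {set U} :=
  foldl (pass_step i) (S_start i) (take (index u (enum U)) (enum U)).

(* CS(w_i, eps, delta, S_before i u, u) is called during the run *)
Definition call_made (i : nat) (u : U) : Prop :=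
  pass_runs i /\ (#|S_before i u| < kappa)%N.

Definition event_E2 : Prop :=
  forall i u, call_made i u ->
    forall t : nat, (0 < t)%N ->
      `|avg (smp i u) t - Delta f (S_before i u) u| <= Ct t.

End CTG.

From mathcomp Require Import all_boot all_order all_algebra.
From mathcomp Require Import reals exp.
From mathcomp Require Import lra.
Import Order.TTheory GRing.Theory Num.Theory.
Local Open Scope ring_scope.

(* Under E2 the empirical mean at step t lies within C_t of Delta f(S,s). If
   2 C_t <= eps + |w - Delta f(S,s)|, then shifting the mean by C_t towards w
   cannot cross the band [w - eps, w + eps] from the side of Delta f(S,s), so
   one of the two stopping tests of CS fires at step t at the latest. *)

Lemma stop_test_of_radius_le_gap {R : realDomainType} {w eps a D C : R} :
  `|a - D| <= C -> 2 * C <= eps + `|w - D| ->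
  (w - eps <= a - C) || (a + C <= w + eps).
Proof.
rewrite ler_norml => /andP[aDl aDr].
by case: (lerP w D) => _ gap; apply/orP; [left | right]; lra.
Qed.

Section CSLoop.
Context {R : realType} {U : finType} {kappa : nat} {Rb eps delta alpha : R}.

Lemma cs_loop_samples_le {w : R} {X : nat -> R} {t : nat} :
  (w - eps <= avg X t - Ct U kappa Rb delta alpha t) ||
  (avg X t + Ct U kappa Rb delta alpha t <= w + eps) ->
  forall fuel t0, (t0 <= t)%N -> (t < t0 + fuel)%N ->
  ((cs_loop U kappa Rb eps delta alpha w X fuel t0).2 <= t)%N.
Proof.
move=> stop_t; elim=> [|fuel IH] t0 t0_le_t t_lt /=.
  by rewrite addn0 in t_lt; move: (leq_trans t_lt t0_le_t); rewrite ltnn.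
case: ifP => [_|not_hi] //; case: ifP => [_|not_lo] //.
move: t0_le_t; rewrite leq_eqVlt => /orP[/eqP t0E | t0_lt_t].
  by move: stop_t; rewrite -t0E not_hi not_lo.
by apply: IH => //; rewrite addSnnS.
Qed.

Lemma CS_samples_le {w D : R} {X : nat -> R} {t : nat} :
  (0 < t)%N -> t%:R <= N2 U kappa Rb eps delta alpha ->
  `|avg X t - D| <= Ct U kappa Rb delta alpha t ->
  2 * Ct U kappa Rb delta alpha t <= eps + `|w - D| ->
  (CS_samples U kappa Rb eps delta alpha w X <= t)%N.
Proof.
move=> t_gt0 t_le_N2 close gap.
rewrite /CS_samples /CS.
apply: (cs_loop_samples_le (stop_test_of_radius_le_gap close gap)) => //.
have N2_ge0 : 0 <= N2 U kappa Rb eps delta alpha := le_trans (ler0n _ t) t_le_N2.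
by rewrite add1n ltnS truncn_ge_nat.
Qed.

End CSLoop.

Theorem lemma6 (R : realType) (U : finType) (f : {set U} -> R) (kappa : nat)
  (Rb eps delta alpha : R) (smp0 : U -> nat -> R) (smp : nat -> U -> nat -> R) :
  (forall X, 0 <= f X) -> set_monotone f -> submodular f ->
  (0 < kappa)%N ->
  0 < eps < 1 -> 0 < delta < 1 -> 0 < alpha < 1 ->
  (forall s k, 0 <= smp0 s k <= Rb) ->
  (forall i u k, 0 <= smp i u k <= Rb) ->
  event_E2 kappa Rb eps delta alpha f smp0 smp ->
  forall (i : nat) (u : U),
    call_made kappa Rb eps delta alpha smp0 smp i u ->
    forall t : nat, (0 < t)%N -> t%:R <= N2 U kappa Rb eps delta alpha ->
      Ct U kappa Rb delta alpha t <=
        phi eps f (wpass (U:=U) Rb eps delta alpha smp0 i)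
            (S_before kappa Rb eps delta alpha smp0 smp i u) u ->
      (CS_samples U kappa Rb eps delta alpha
         (wpass (U:=U) Rb eps delta alpha smp0 i) (smp i u) <= t)%N.
Proof.
move=> _ _ _ _ _ _ _ _ _ E2 i u called t t_gt0 t_le_N2 C_le_phi.
apply: (CS_samples_le t_gt0 t_le_N2 (E2 i u called t t_gt0)).
by rewrite -ler_pdivlMl // mulrC.
Qed.
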